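(* Let $k=\mathbf{F}_q$, $F=k((\epsilon))$, $\mathcal{O}=k[[\epsilon]]$, $G=\mathrm{GL}_3$, $K=G(\mathcal{O})$, and let $U_0$ be the group of upper unitriangular $3\times 3$ matrices. Let $\mathbf{i}$ be one of the two reduced words $(1,2,1)$ or $(2,1,2)$ of the longest element $w_0$ of the Weyl group $S_3$. Then for every $u\in U_0(F)$ there exists $(t_1,t_2,t_3)\in F^3$ such that $\mathbf{y}_{\mathbf{i}}(t_1,t_2,t_3)$ is defined and $$uK=\mathbf{y}_{\mathbf{i}}(t_1,t_2,t_3)^{-1}K \quad\text{in } G(F)/K .$$
   Context: For $i=1,2$ let $\mathbf{x}_i(t)=1+tE_{i,i+1}\in U_0$ (with $E_{a,b}$ the elementary matrix), and for a reduced word $\mathbf{i}=(i_1,i_2,i_3)$ put $\mathbf{x}_{\mathbf{i}}(t_1,t_2,t_3)=\mathbf{x}_{i_3}(t_3)\mathbf{x}_{i_2}(t_2)\mathbf{x}_{i_1}(t_1)$. For a matrix $g$ admitting a Gaussian decomposition $g=vtu$ with $v$ lower unitriangular, $t$ diagonal, $u$ upper unitriangular, write $[g]_+=u$. Let $\bar s_i$ be the image of $\begin{bmatrix}0&1\\-1&0\end{bmatrix}$ under the embedding of $\mathrm{SL}_2$ in $G$ in rows/columns $i,i+1$, and $\bar w_0=\bar s_1\bar s_2\bar s_1$. The map $\eta(y)=[\bar w_0 y^{t}]_+$ ($y^t$ the transpose) is a birational automorphism of $U_0$; define the rational map $\mathbf{y}_{\mathbf{i}}=\eta^{-1}\circ\mathbf{x}_{\mathbf{i}}$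 (Berenstein–Fomin–Zelevinsky parametrization), applied over the field $F$. *)

From HB Require Import structures.
From mathcomp Require Import all_boot all_order all_algebra.
From mathcomp Require Import boolp.
Set Implicit Arguments. Unset Strict Implicit. Unset Printing Implicit Defensive.
Import Order.TTheory GRing.Theory.
Local Open Scope ring_scope.

Section PowerSeries.
Variable k : fieldType.

Record ps := PS { coef : nat -> k }.

HB.instance Definition _ := gen_eqMixin ps.
HB.instance Definition _ := gen_choiceMixin ps.

Lemma ps_ext (a b : ps) : (forall n, coef a n = coef b n) -> a = b.
Proof. by case: a => f; case: b => g H; congr PS; apply: funext => n; exact: H. Qed.

Definition ps0 := PS (fun _ => 0).
Definition psopp a := PS (fun n => - coef a n).
Definition psadd a b := PS (fun n => coef a n + coef b n).

Fact psaddA : associative psadd.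
Proof. by move=> a b c; apply: ps_ext => n /=; rewrite addrA. Qed.
Fact psaddC : commutative psadd.
Proof. by move=> a b; apply: ps_ext => n /=; rewrite addrC. Qed.
Fact psadd0 : left_id ps0 psadd.
Proof. by move=> a; apply: ps_ext => n /=; rewrite add0r. Qed.
Fact psaddN : left_inverse ps0 psopp psadd.
Proof. by move=> a; apply: ps_ext => n /=; rewrite addNr. Qed.

HB.instance Definition _ := GRing.isZmodule.Build ps psaddA psaddC psadd0 psaddN.

Definition trunc n (a : ps) : {poly k} := \poly_(i < n.+1) coef a i.

Definition psmul a b := PS (fun n => (trunc n a * trunc n b)`_n).
Definition ps1 := PS (fun n => (n == 0%N)%:R).

Lemma coef_psmul a b n :
  coef (psmul a b) n = \sum_(j < n.+1) coef a j * coef b (n - j).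
Proof.
rewrite /= coefM; apply: eq_bigr => j _.
by rewrite !coef_poly ltn_ord ltnS leq_subr.
Qed.

Lemma psmul_poly (p q : {poly k}) a b n :
  (forall i, (i <= n)%N -> p`_i = coef a i) ->
  (forall i, (i <= n)%N -> q`_i = coef b i) ->
  (p * q)`_n = coef (psmul a b) n.
Proof.
move=> Hp Hq; rewrite coef_psmul coefM; apply: eq_bigr => j _.
by rewrite Hp ?Hq ?leq_subr // -ltnS.
Qed.

Lemma coef_trunc n a i : (i <= n)%N -> (trunc n a)`_i = coef a i.
Proof. by move=> H; rewrite coef_poly ltnS H. Qed.

Fact psmulA : associative psmul.
Proof.
move=> a b c; apply: ps_ext => n.
transitivity ((trunc n a * (trunc n b * trunc n c))`_n).
  symmetry; apply: psmul_poly => i Hi; first exact: coef_trunc.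
  by apply: psmul_poly => l Hl; apply: coef_trunc; apply: leq_trans Hi.
rewrite mulrA; apply: psmul_poly => i Hi; last exact: coef_trunc.
by apply: psmul_poly => l Hl; apply: coef_trunc; apply: leq_trans Hi.
Qed.

Fact psmulC : commutative psmul.
Proof. by move=> a b; apply: ps_ext => n /=; rewrite mulrC. Qed.

Fact psmul1 : left_id ps1 psmul.
Proof.
move=> a; apply: ps_ext => n; rewrite -(psmul_poly (p := 1) (q := trunc n a)).
- by rewrite mul1r coef_trunc.
- by move=> i _; rewrite coef1.
- by move=> i Hi; rewrite coef_trunc.
Qed.

Fact psmulDl : left_distributive psmul psadd.
Proof.
move=> a b c; apply: ps_ext => n.
rewrite -(psmul_poly (p := trunc n a + trunc n b) (q := trunc n c)).
- by rewrite mulrDl coefD.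
- by move=> i Hi; rewrite coefD !coef_trunc.
- by move=> i Hi; rewrite coef_trunc.
Qed.

Fact ps1_neq0 : ps1 != ps0.
Proof.
apply/eqP => H; have := congr1 (fun x => coef x 0) H => /=.
by move/eqP; rewrite oner_eq0.
Qed.

HB.instance Definition _ :=
  GRing.Zmodule_isComNzRing.Build ps psmulA psmulC psmul1 psmulDl ps1_neq0.

Definition psunit : {pred ps} := fun x => `[< exists y : ps, y * x = 1 >].
Definition psinv (x : ps) : ps :=
  match pselect (exists y : ps, y * x = 1) with
  | left P => proj1_sig (cid P)
  | right _ => x
  end.

Fact psmulVx : {in psunit, left_inverse 1 psinv *%R}.
Proof.
move=> x /asboolP Hx; rewrite /psinv; case: pselect => [P|//].
by case: cid.
Qed.

Fact psunitPl : forall x y : ps, y * x = 1 -> psunit x.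
Proof. by move=> x y H; apply/asboolP; exists y. Qed.

Fact psinv_out : {in [predC psunit], psinv =1 id}.
Proof.
move=> x; rewrite inE /= => /asboolPn Hx; rewrite /psinv.
by case: pselect.
Qed.

HB.instance Definition _ :=
  GRing.ComNzRing_hasMulInverse.Build ps psmulVx psunitPl psinv_out.

Lemma ps_nz_coef (x : ps) : x != 0 -> exists n, coef x n != 0.
Proof.
move=> xn0; case: (pselect (exists n, coef x n != 0)) => // Hx; exfalso.
apply/(negP xn0)/eqP/ps_ext => n /=.
by case: (eqVneq (coef x n) 0) => // h; exfalso; apply: Hx; exists n.
Qed.

Fact ps_idomain : GRing.integral_domain_axiom ps.
Proof.
move=> x y Hxy; case: (eqVneq x 0) => //= /ps_nz_coef Hx.
apply/eqP; apply: contrapT => /eqP /ps_nz_coef Hy.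
case: (ex_minnP Hx) => i xi imin; case: (ex_minnP Hy) => j yj jmin.
have := congr1 (fun z => coef z (i + j)) Hxy.
change (coef (psmul x y) (i + j) = 0 -> False).
rewrite coef_psmul.
rewrite (bigD1 (Ordinal (n := (i + j).+1) (leq_addr j i))) //= big1.
  by rewrite addr0 addKn => /eqP; rewrite mulf_eq0 (negPf xi) (negPf yj).
move=> [m Hm] /= Hmi.
have [lt_mi | lt_im | eq_mi] := ltngtP m i.
- case: (eqVneq (coef x m) 0) => [->|h]; first by rewrite mul0r.
  by have := imin m h; rewrite leqNgt lt_mi.
- case: (eqVneq (coef y (i + j - m)) 0) => [->|h]; first by rewrite mulr0.
  have := jmin _ h; rewrite leqNgt => /negP []; rewrite ltn_subLR; last first.
    by rewrite -ltnS.
  by rewrite ltn_add2r.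
- by exfalso; move: Hmi; apply/negP; rewrite negbK; apply/eqP/val_inj; rewrite /= eq_mi.
Qed.

HB.instance Definition _ := GRing.ComUnitRing_isIntegral.Build ps ps_idomain.

End PowerSeries.

Notation PowerSeries k := (ps k).
Notation LaurentSeries k := {fraction (ps k)}.

Section GL3.
Variable F : fieldType.

(* x lies in the valuation ring O, seen inside F = Frac(O) via [R] *)
Definition in_image (R : idomainType) (x : {fraction R}) : Prop :=
  exists a : R, x = FracField.tofrac a.

Definition upper_unitri (g : 'M[F]_3) : Prop :=
  (forall i j : 'I_3, (j < i)%N -> g i j = 0) /\ (forall i, g i i = 1).
Definition lower_unitri (g : 'M[F]_3) : Prop :=
  (forall i j : 'I_3, (i < j)%N -> g i j = 0) /\ (forall i, g i i = 1).
Definition inv_diagonal (g : 'M[F]_3) : Prop :=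
  (forall i j : 'I_3, i != j -> g i j = 0) /\ g \in unitmx.

(* [gauss_plus g u] : g admits a Gaussian decomposition g = v t u and
   [g]_+ = u *)
Definition gauss_plus (g u : 'M[F]_3) : Prop :=
  exists v t, lower_unitri v /\ inv_diagonal t /\ upper_unitri u /\
              g = v *m t *m u.

(* x_i(t) = 1 + t E_{i,i+1}, for i = 1, 2 (1-indexed as in the paper) *)
Definition xgen (i : nat) (t : F) : 'M[F]_3 :=
  1%:M + t *: delta_mx (inord i.-1) (inord i).

Definition xword (i1 i2 i3 : nat) (t1 t2 t3 : F) : 'M[F]_3 :=
  xgen i3 t3 *m xgen i2 t2 *m xgen i1 t1.

(* \bar s_i : image of [[0,1],[-1,0]] in rows/columns i, i+1 (1-indexed) *)
Definition sbar (i : nat) : 'M[F]_3 :=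
  \matrix_(a, b)
    if (a == i.-1 :> nat) && (b == i :> nat) then 1
    else if (a == i :> nat) && (b == i.-1 :> nat) then -1
    else if (a == b) && (a != i.-1 :> nat) && (a != i :> nat) then 1
    else 0.

Definition w0bar : 'M[F]_3 := sbar 1 *m sbar 2 *m sbar 1.

(* eta(y) = [w0bar y^T]_+ is defined at y and equals x *)
Definition eta_rel (y x : 'M[F]_3) : Prop := gauss_plus (w0bar *m y^T) x.

(* y_i(t1,t2,t3) = eta^{-1}(x_i(t1,t2,t3)) is defined and equals y *)
Definition yBFZ (i1 i2 i3 : nat) (t1 t2 t3 : F) (y : 'M[F]_3) : Prop :=
  upper_unitri y /\ eta_rel y (xword i1 i2 i3 t1 t2 t3).

End GL3.

(* K = GL_3(O): invertible matrices over F whose entries and whose inverse's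
   entries lie in O = k[[eps]]. *)
Definition inK (k : fieldType) (g : 'M[LaurentSeries k]_3) : Prop :=
  g \in unitmx /\ (forall i j, in_image (g i j)) /\
  (forall i j, in_image (invmx g i j)).

Definition lcosetK (k : fieldType) (g : 'M[LaurentSeries k]_3) :
  'M[LaurentSeries k]_3 -> Prop :=
  fun x => exists h, inK h /\ x = g *m h.

From HB Require Import structures.
From mathcomp Require Import all_boot all_order all_algebra.
From mathcomp Require Import boolp ring.
Set Implicit Arguments. Unset Strict Implicit. Unset Printing Implicit Defensive.
Import GRing.Theory.
Local Open Scope ring_scope.

(** Write [u = U(p,q,r)] for the upper unitriangular matrix with entries
    [p, q, r] above the diagonal. Right multiplication by [U(a,b,c)] with
    [a, b, c] in [O] does not change the coset [uK], and [a, b, c] can be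
    chosen so that [uU(a,b,c) = U(A,B,C)] has all its corner minors
    [A, B, C, AC - B] nonzero: each condition excludes at most two values,
    and [0, 1, eps] are three distinct elements of [O]. For such a matrix
    [y = U(A,B,C)^-1], the Gaussian decomposition of [w0bar y^T] is explicit,
    and its upper part [U(-C/(AC-B), 1/(AC-B), -A/B)] has nonzero corner
    entries, so it lies in the image of [x_i] for both reduced words. *)

Section Unitriangular.
Variable F : fieldType.

Definition unitri3 (a b c : F) : 'M[F]_3 := \matrix_(i, j)
  if i == j then 1 else
  if (i == 0 :> nat) && (j == 1 :> nat) then a else
  if (i == 0 :> nat) && (j == 2 :> nat) then b else
  if (i == 1 :> nat) && (j == 2 :> nat) then c else 0.

Definition diag3 (a b c : F) : 'M[F]_3 := \matrix_(i, j)
  if i == j then (if i == 0 :> nat then a else if i == 1 :> nat then b else c)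
  else 0.

Definition nonzero_minors (a b c : F) : Prop :=
  [/\ a != 0, b != 0, c != 0 & a * c - b != 0].

Ltac expand_mx3 :=
  apply/matrixP; case=> [[|[|[|?]]] ?] //; case=> [[|[|[|?]]] ?] //;
  rewrite ?(mxE, big_ord_recr, big_ord0) /= -?val_eqE /= ?inordK //=;
  rewrite ?(mulr0, mul0r, mulr1, mul1r, addr0, add0r, mulrN, mulNr, opprK, oppr0) //.

Lemma unitri3_mul a b c a' b' c' :
  unitri3 a b c *m unitri3 a' b' c' = unitri3 (a + a') (b + a * c' + b') (c + c').
Proof. by expand_mx3; ring. Qed.

Lemma unitri3_0 : unitri3 0 0 0 = 1%:M.
Proof. by expand_mx3. Qed.

Lemma upper_unitri3 a b c : upper_unitri (unitri3 a b c).
Proof.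
split; first by move=> [[|[|[|?]]] ?] [[|[|[|?]]] ?] //; rewrite mxE.
by move=> [[|[|[|?]]] ?] //; rewrite mxE eqxx.
Qed.

Lemma lower_unitri3_tr a b c : lower_unitri (unitri3 a b c)^T.
Proof.
split; first by move=> [[|[|[|?]]] ?] [[|[|[|?]]] ?] //; rewrite !mxE.
by move=> [[|[|[|?]]] ?] //; rewrite !mxE eqxx.
Qed.

Lemma upper_unitriP (u : 'M[F]_3) :
  upper_unitri u -> exists a b c, u = unitri3 a b c.
Proof.
move=> [u_low u_diag].
exists (u (inord 0) (inord 1)), (u (inord 0) (inord 2)), (u (inord 1) (inord 2)).
apply/matrixP=> i j; rewrite mxE.
case: i j => [[|[|[|i]]] Hi] [[|[|[|j]]] Hj] //=;
  try by [rewrite u_low | rewrite (bool_irrelevance Hj Hi) u_diag].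
all: by congr fun_of_matrix; apply: val_inj; rewrite /= inordK.
Qed.

Lemma diag3_inv_diagonal a b c :
  a != 0 -> b != 0 -> c != 0 -> inv_diagonal (diag3 a b c).
Proof.
move=> a0 b0 c0; split; first by move=> [[|[|[|?]]] ?] [[|[|[|?]]] ?] //; rewrite mxE.
have inv_diag : diag3 a b c *m diag3 a^-1 b^-1 c^-1 = 1%:M by expand_mx3; rewrite mulfV.
by case: (mulmx1_unit inv_diag).
Qed.

Lemma invmx_uniq n (A B : 'M[F]_n) : A *m B = 1%:M -> invmx A = B.
Proof.
move=> AB; have [uA _] := mulmx1_unit AB.
by rewrite -[invmx A]mulmx1 -AB mulmxA mulVmx // mul1mx.
Qed.

Lemma invmx_mul n (A B : 'M[F]_n) :
  A \in unitmx -> B \in unitmx -> invmx (A *m B) = invmx B *m invmx A.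
Proof.
move=> uA uB; apply: invmx_uniq.
by rewrite mulmxA -(mulmxA A) mulmxV // mulmx1 mulmxV.
Qed.

Lemma unitri3_mulV a b c : unitri3 a b c *m unitri3 (- a) (a * c - b) (- c) = 1%:M.
Proof. by rewrite unitri3_mul -unitri3_0; congr unitri3; ring. Qed.

Lemma invmx_unitri3 a b c : invmx (unitri3 a b c) = unitri3 (- a) (a * c - b) (- c).
Proof. exact/invmx_uniq/unitri3_mulV. Qed.

Lemma w0barE : w0bar F =
  \matrix_(i, j) if (i + j == 2)%N then (if i == 1 :> nat then -1 else 1) else 0.
Proof. by rewrite /w0bar /sbar; expand_mx3. Qed.

Lemma eta_rel_unitri3 A B C : B != 0 -> A * C - B != 0 ->
  eta_rel (unitri3 (- A) (A * C - B) (- C))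
          (unitri3 (- C / (A * C - B)) (A * C - B)^-1 (- A / B)).
Proof.
set D := A * C - B => B0 D0.
exists (unitri3 (A / D) D^-1 (C / B))^T, (diag3 D (B / D) B^-1).
split; first exact: lower_unitri3_tr.
split; first by apply: diag3_inv_diagonal; rewrite ?mulf_neq0 ?invr_eq0.
split; first exact: upper_unitri3.
by rewrite w0barE /D; expand_mx3; field; rewrite ?B0 ?D0.
Qed.

Lemma xgen1E (t : F) : xgen 1 t = unitri3 t 0 0.
Proof. by expand_mx3. Qed.

Lemma xgen2E (t : F) : xgen 2 t = unitri3 0 0 t.
Proof. by expand_mx3. Qed.

Lemma xword121_unitri3 a b c : c != 0 ->
  xword 1 2 1 (a - b / c) c (b / c) = unitri3 a b c.
Proof.
by move=> c0; rewrite /xword !xgen1E !xgen2E !unitri3_mul; congr unitri3; field.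
Qed.

Lemma xword212_unitri3 a b c : a != 0 ->
  xword 2 1 2 (b / a) a (c - b / a) = unitri3 a b c.
Proof.
by move=> a0; rewrite /xword !xgen1E !xgen2E !unitri3_mul; congr unitri3; field.
Qed.

Lemma yBFZ_invmx_unitri3 (i1 i2 i3 : nat) A B C :
  (i1, i2, i3) = (1%N, 2%N, 1%N) \/ (i1, i2, i3) = (2%N, 1%N, 2%N) ->
  nonzero_minors A B C ->
  exists t1 t2 t3, yBFZ i1 i2 i3 t1 t2 t3 (invmx (unitri3 A B C)).
Proof.
move=> word [A0 B0 C0 D0]; rewrite invmx_unitri3.
have eta_y := eta_rel_unitri3 B0 D0.
have AB0 : - A / B != 0 by rewrite mulf_neq0 ?oppr_eq0 ?invr_eq0.
have CD0 : - C / (A * C - B) != 0 by rewrite mulf_neq0 ?oppr_eq0 ?invr_eq0.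
case: word => [[-> -> ->]|[-> -> ->]].
- rewrite -(xword121_unitri3 _ _ AB0) in eta_y.
  by do 3!eexists; split; [exact: upper_unitri3 | exact: eta_y].
- rewrite -(xword212_unitri3 _ _ CD0) in eta_y.
  by do 3!eexists; split; [exact: upper_unitri3 | exact: eta_y].
Qed.

End Unitriangular.

Section Subring.
Variable R : idomainType.

Lemma in_image0 : in_image (0 : {fraction R}).
Proof. by exists 0; rewrite tofrac0. Qed.

Lemma in_image1 : in_image (1 : {fraction R}).
Proof. by exists 1; rewrite tofrac1. Qed.

Lemma in_imageN (x : {fraction R}) : in_image x -> in_image (- x).
Proof. by move=> [a ->]; exists (- a); rewrite tofracN. Qed.

Lemma in_imageD (x y : {fraction R}) : in_image x -> in_image y -> in_image (x + y).
Proof. by move=> [a ->] [b ->]; exists (a + b); rewrite tofracD. Qed.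

Lemma in_imageM (x y : {fraction R}) : in_image x -> in_image y -> in_image (x * y).
Proof. by move=> [a ->] [b ->]; exists (a * b); rewrite tofracM. Qed.

Lemma in_image_mulmx m n p (M : 'M[{fraction R}]_(m, n)) (N : 'M_(n, p)) :
  (forall i j, in_image (M i j)) -> (forall i j, in_image (N i j)) ->
  forall i j, in_image ((M *m N) i j).
Proof.
move=> OM ON i j; rewrite mxE.
apply: (big_ind (fun x => in_image x)); [exact: in_image0 | exact: in_imageD |].
by move=> l _; apply: in_imageM.
Qed.

Lemma in_image_unitri3 (a b c : {fraction R}) :
  in_image a -> in_image b -> in_image c -> forall i j, in_image (unitri3 a b c i j).
Proof.
move=> Oa Ob Oc [[|[|[|i]]] Hi] [[|[|[|j]]] Hj] //; rewrite mxE /=;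
  first [exact: in_image0 | exact: in_image1 | assumption].
Qed.

End Subring.

Lemma exists_neq_of2 (T : eqType) (P : T -> Prop) (a0 a1 x : T) :
  P a0 -> P a1 -> a0 != a1 -> exists a, P a /\ a != x.
Proof.
move=> P0 P1 a01; have [a0x|] := eqVneq a0 x; last by exists a0.
by exists a1; split; rewrite // -a0x eq_sym.
Qed.

Lemma exists_neq2_of3 (T : eqType) (P : T -> Prop) (a0 a1 a2 x y : T) :
  P a0 -> P a1 -> P a2 -> a0 != a1 -> a0 != a2 -> a1 != a2 ->
  exists a, [/\ P a, a != x & a != y].
Proof.
move=> P0 P1 P2 a01 a02 a12.
have [a0x|a0x] := eqVneq a0 x.
  have [a1y|a1y] := eqVneq a1 y; last by exists a1; rewrite -a0x (eq_sym a1).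
  by exists a2; rewrite -a0x -a1y !(eq_sym a2).
have [a0y|a0y] := eqVneq a0 y; last by exists a0.
have [a1x|a1x] := eqVneq a1 x; last by exists a1; rewrite -a0y (eq_sym a1 a0).
by exists a2; rewrite -a0y -a1x !(eq_sym a2).
Qed.

Section CosetK.
Variable k : fieldType.
Local Notation LF := (LaurentSeries k).

Lemma inK_mul (M N : 'M[LF]_3) : inK M -> inK N -> inK (M *m N).
Proof.
move=> [uM [OM OMV]] [uN [ON ONV]]; split; first by rewrite unitmx_mul uM.
split; first exact: in_image_mulmx.
rewrite (invmx_mul uM uN); exact: in_image_mulmx ONV OMV.
Qed.

Lemma inK_inv (M : 'M[LF]_3) : inK M -> inK (invmx M).
Proof. by move=> [uM [OM OMV]]; rewrite /inK unitmx_inv invmxK. Qed.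

Lemma inK_unitri3 (a b c : LF) :
  in_image a -> in_image b -> in_image c -> inK (unitri3 a b c).
Proof.
move=> Oa Ob Oc; have [u_unit _] := mulmx1_unit (unitri3_mulV a b c).
split=> //; split; first exact: in_image_unitri3.
rewrite invmx_unitri3; apply: in_image_unitri3; try exact: in_imageN.
by apply: in_imageD; [exact: in_imageM | exact: in_imageN].
Qed.

Lemma lcosetK_mulr (u h : 'M[LF]_3) :
  inK h -> forall g, lcosetK u g <-> lcosetK (u *m h) g.
Proof.
move=> Kh g; have [uh _] := Kh; split=> [[m [Km ->]]|[m [Km ->]]].
- exists (invmx h *m m); split; first exact/inK_mul/Km/inK_inv.
  by rewrite mulmxA -(mulmxA u) mulmxV // mulmx1.
- by exists (h *m m); split; [exact: inK_mul | rewrite mulmxA].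
Qed.

Definition eps : LF := FracField.tofrac (PS (fun n => (n == 1)%N%:R)).

Lemma in_image_eps : in_image eps.
Proof. by eexists. Qed.

Lemma eps_neq0 : eps != 0.
Proof.
rewrite tofrac_eq0; apply/eqP => /(congr1 (fun s => coef s 1)) /= /eqP.
by rewrite oner_eq0.
Qed.

Lemma eps_neq1 : eps != 1.
Proof.
rewrite -tofrac1 tofrac_eq; apply/eqP => /(congr1 (fun s => coef s 0)) /= /eqP.
by rewrite eq_sym oner_eq0.
Qed.

Lemma unitri3_perturb (p q r : LF) : exists a b c,
  [/\ in_image a, in_image b, in_image c &
      nonzero_minors (p + a) (q + p * c + b) (r + c)].
Proof.
have [a [Oa ap]] := exists_neq_of2 (- p) (@in_image1 _) (@in_image0 _) (oner_neq0 _).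
have [c [Oc cr]] := exists_neq_of2 (- r) (@in_image1 _) (@in_image0 _) (oner_neq0 _).
set A := p + a; set C := r + c; set B0 := q + p * c.
have [b [Ob bB bD]] := exists_neq2_of3 (- B0) (A * C - B0) in_image_eps
  (@in_image1 _) (@in_image0 _) eps_neq1 eps_neq0 (oner_neq0 _).
exists a, b, c; split=> //; split.
- by rewrite /A addrC addr_eq0.
- by rewrite addrC addr_eq0.
- by rewrite /C addrC addr_eq0.
- by rewrite opprD addrA subr_eq0 eq_sym.
Qed.

End CosetK.

Theorem mainTheorem1 (k : finFieldType) (i1 i2 i3 : nat) :
  (i1, i2, i3) = (1%N, 2%N, 1%N) \/ (i1, i2, i3) = (2%N, 1%N, 2%N) ->
  forall u : 'M[LaurentSeries k]_3, upper_unitri u ->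
  exists (t1 t2 t3 : LaurentSeries k) (y : 'M[LaurentSeries k]_3),
    yBFZ i1 i2 i3 t1 t2 t3 y /\
    (forall g : 'M[LaurentSeries k]_3, lcosetK u g <-> lcosetK (invmx y) g).
Proof.
move=> word u /upper_unitriP [p [q [r ->]]].
have [a [b [c [Oa Ob Oc minors]]]] := unitri3_perturb p q r.
have [t1 [t2 [t3 y_BFZ]]] := yBFZ_invmx_unitri3 word minors.
exists t1, t2, t3, (invmx (unitri3 (p + a) (q + p * c + b) (r + c))).
split=> // g; rewrite invmxK -unitri3_mul.
exact: lcosetK_mulr (inK_unitri3 Oa Ob Oc) g.
Qed.
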